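(* Let $n\ge 1$, let $B_1,\dots,B_n$ be independent real-valued service times with finite means $\mu_i$ and variances $\sigma_i^2$, and let $\omega\in(0,1)$. Assume (dilation ordering) $B_1\le_{\mathrm{dil}}B_2\le_{\mathrm{dil}}\cdots\le_{\mathrm{dil}}B_n$, and (symmetry) each $B_i$ has a distribution symmetric around its mean $\mu_i$. Then $$\varrho_\omega=\frac{C(\mathrm{Id},\boldsymbol\mu,\omega)}{\min_{\tau\in\mathsf S_n}C(\tau,\boldsymbol\mu,\omega)}\le 2.$$
   Context: Appointment model: a sequence is a permutation $\tau\in\mathsf S_n$ of $\{1,\dots,n\}$, $\tau(i)$ being the patient in appointment slot $i$. A schedule is a vector $\boldsymbol x=(x_1,\dots,x_n)$, where $x_j$ is the interarrival time between patient $j$ and the next patient. Waiting times $W_i$ and idle times $I_i$ of slot $i$ are given by $W_1=I_1=0$ and $W_{i+1}=(W_i+B_{\tau(i)}-x_{\tau(i)})^+$, $I_{i+1}=(W_i+B_{\tau(i)}-x_{\tau(i)})^-$, where $a^+=\max\{0,a\}$, $a^-=\max\{0,-a\}$. The cost is $C(\tau,\boldsymbol x,\omega)=\omega\sum_{i=1}^n\mathbb E I_i+(1-\omega)\sum_{i=1}^n\mathbb E W_i$. The mean-based schedule is $\boldsymbol\mu=(\mu_1,\dots,\mu_n)$, and $\mathrm{Id}$ is the identity permutation (the smallest-variance-first sequence). For random variables $A,B$, $A\le_{\mathrm{cx}}B$ means $\mathbb E\phi(A)\le\mathbb E\phi(B)$ for all convex $\phi:\mathbb R\to\mathbb R$ for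 which the expectations exist, and $A\le_{\mathrm{dil}}B$ means $A-\mathbb EA\le_{\mathrm{cx}}B-\mathbb EB$. *)

From HB Require Import structures.
From mathcomp Require Import all_boot all_order all_algebra all_fingroup.
From mathcomp Require Import all_classical all_reals all_analysis.
Set Implicit Arguments. Unset Strict Implicit. Unset Printing Implicit Defensive.
Import Order.TTheory GRing.Theory Num.Theory.
Local Open Scope classical_set_scope.
Local Open Scope ring_scope.

Section defs.
Context {d : measure_display} {T : measurableType d} {R : realType}.

Definition convex_fun (phi : R -> R) : Prop :=
  forall (x y t : R), 0 <= t -> t <= 1 ->
    phi (t * x + (1 - t) * y) <= t * phi x + (1 - t) * phi y.

Definition cx_le (P : probability T R) (X Y : T -> R) : Prop :=
  forall phi : R -> R, convex_fun phi ->
    P.-integrable setT (fun t => (phi (X t))%:E) ->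
    P.-integrable setT (fun t => (phi (Y t))%:E) ->
    ('E_P[phi \o X] <= 'E_P[phi \o Y])%E.

Definition mean (P : probability T R) (X : T -> R) : R := fine 'E_P[X].

Definition dil_le (P : probability T R) (X Y : T -> R) : Prop :=
  cx_le P (fun t => X t - mean P X) (fun t => Y t - mean P Y).

Definition mutually_independent (P : probability T R) (n : nat)
  (X : 'I_n -> T -> R) : Prop :=
  forall A : 'I_n -> set R, (forall i, measurable (A i)) ->
    fine (P (\bigcap_i (X i @^-1` A i))) =
    \prod_(i < n) fine (P (X i @^-1` A i)).

Definition symmetric_around_mean (P : probability T R) (X : T -> R) : Prop :=
  forall A : set R, measurable A ->
    P ((fun t => X t - mean P X) @^-1` A) = P ((fun t => mean P X - X t) @^-1` A).

(* increment of slot k (0-indexed): B_{tau(k)} - x_{tau(k)}; 0 beyond n *)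
Definition slot_incr (n : nat) (tau : 'S_n) (B : 'I_n -> T -> R)
  (x : 'I_n -> R) (k : nat) (t : T) : R :=
  match (insub k : option 'I_n) with
  | Some i => B (tau i) t - x (tau i)
  | None => 0
  end.

(* waiting time of slot k+1 (0-indexed slot k): W_1 = 0,
   W_{i+1} = (W_i + B_{tau(i)} - x_{tau(i)})^+ *)
Fixpoint waitW (n : nat) (tau : 'S_n) (B : 'I_n -> T -> R)
  (x : 'I_n -> R) (k : nat) (t : T) : R :=
  match k with
  | 0 => 0
  | k'.+1 => Num.max 0 (waitW tau B x k' t + slot_incr tau B x k' t)
  end.

Definition idleI (n : nat) (tau : 'S_n) (B : 'I_n -> T -> R)
  (x : 'I_n -> R) (k : nat) (t : T) : R :=
  match k with
  | 0 => 0
  | k'.+1 => Num.max 0 (- (waitW tau B x k' t + slot_incr tau B x k' t))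
  end.

Definition cost (P : probability T R) (n : nat) (B : 'I_n -> T -> R)
  (tau : 'S_n) (x : 'I_n -> R) (omega : R) : \bar R :=
  ((omega%:E * \sum_(k < n) 'E_P[idleI tau B x k]) +
   ((1 - omega)%:E * \sum_(k < n) 'E_P[waitW tau B x k]))%E.

End defs.

From HB Require Import structures.
From mathcomp Require Import all_boot all_order all_algebra all_fingroup.
From mathcomp Require Import all_classical all_reals all_analysis.
From mathcomp Require Import ring lra measurable_realfun.
Set Implicit Arguments.
Unset Strict Implicit.
Unset Printing Implicit Defensive.
Import Order.TTheory GRing.Theory Num.Theory.
Local Open Scope classical_set_scope.
Local Open Scope ring_scope.

(** Write [Z i = B i - mu i] and [S^s_k] for the sum of the first [k] of the
  [Z]'s in the order [s]. With the mean-based schedule the increments of the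
  Lindley recursion are the [Z]'s, so [S^s_k <= W^s_k] and [E S^s_k = 0], and
  the expected idle times telescope to [E W_n]. Both costs are thus nonnegative
  combinations of the [E W_k], and it suffices to prove, for every slot [k],
    [E W^Id_k <= E |S^Id_k| <= E |S^s_k| <= 2 E W^s_k].
  The last step holds because [E|S| = 2 E S^+] when [E S = 0]. For the middle
  one, independence gives [E|S + Z_c| = E f_c(S)] with [f_c x = E|x + Z_c|],
  and [f_c] increases with [c] by the dilation order applied to the convex
  map [z |-> |x + z|]; so exchanging a summand for one of smaller index lowers
  [E|S|], and the first [k] indices minimise [E|S_A|] among [k]-sets [A]. The
  first step is the stochastic domination [W_k <=st |S_k|], by induction on
  [k]: conditionally on the past, [x |-> E phi(max(0, x + Z))] is
  nondecreasing, and [max(0, |x| + Z) <= ||x| + Z|], which has the law of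
  [|x + Z|] because [Z] is symmetric. *)

Section independent_events.
Context d (T : measurableType d) (R : realType) (P : probability T R).

Lemma indep_lambda_system (F : set T) : measurable F ->
  lambda_system setT [set E | measurable E /\ P (E `&` F) = (P E * P F)%E].
Proof.
move=> mF; split => //.
- by split; [exact: measurableT|rewrite setTI probability_setT mul1e].
- move=> X Y YX [mX hX] [mY hY]; split; first exact: measurableD.
  have mXF := measurableI _ _ mX mF; have mYF := measurableI _ _ mY mF.
  have finP A : measurable A -> (P A < +oo)%E.
    by move=> mA; rewrite ltey_eq fin_num_measure.
  have -> : (X `\` Y) `&` F = (X `&` F) `\` (Y `&` F).
    apply/seteqP; split=> t /=.
      by move=> [[Xt nYt] Ft]; split=> // -[].
    by move=> [[Xt Ft] nYF]; split=> //; split=> // Yt; exact: nYF.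
  rewrite !measureD ?finP // setIACA setIid !(setIidr YX).
  transitivity (P X * P F - P Y * P F)%E; first by congr (_ - _)%E.
  by rewrite muleBl ?fin_num_adde_defr ?fin_num_measure.
- move=> G ndG HG; have mG k : measurable (G k) by case: (HG k).
  split; first exact: bigcup_measurable.
  have cvg_GF : (fun k => P (G k `&` F)) @ \oo --> P (\bigcup_k (G k `&` F)).
    apply: nondecreasing_cvg_mu.
    - by move=> k; exact: measurableI.
    - by apply: bigcup_measurable => k _; exact: measurableI.
    - by move=> a b ab; apply/subsetPset; apply: setSI; exact/subsetPset/ndG.
  have cvg_G : (fun k => P (G k) * P F)%E @ \oo --> (P (\bigcup_k G k) * P F)%E.
    apply: cvgeZr; first exact: fin_num_measure.
    by apply: nondecreasing_cvg_mu => //; exact: bigcup_measurable.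
  have GF_indep : (fun k => P (G k `&` F)) = (fun k => P (G k) * P F)%E.
    by apply/funext => k; case: (HG k).
  rewrite setI_bigcupl; rewrite GF_indep in cvg_GF.
  exact: cvg_unique cvg_GF cvg_G.
Qed.

End independent_events.

Section independent_family.
Context d (T : measurableType d) (R : realType) (P : probability T R) (n : nat).
Variable B : 'I_n -> T -> R.
Hypothesis mB : forall i, measurable_fun setT (B i).
Hypothesis indB : mutually_independent P B.
Implicit Types (J : {set 'I_n}) (i j : 'I_n).

(** [sigma_cylinder J] is the sigma-algebra generated by the [B j], [j \in J];
  the cylinders form a pi-system generating it. *)
Definition cylinder (J : {set 'I_n}) : set (set T) :=
  [set E | exists A : 'I_n -> set R, [/\ forall j, measurable (A j),
     forall j, j \notin J -> A j = setT & E = \bigcap_j (B j @^-1` A j)]].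

Definition sigma_cylinder (J : {set 'I_n}) := g_sigma_algebraType (cylinder J).

Lemma measurable_preimage j (A : set R) : measurable A -> measurable (B j @^-1` A).
Proof. by move=> mA; rewrite -[X in measurable X]setTI; exact: mB. Qed.

Let fineE {E : set T} : measurable E -> P E = (fine (P E))%:E.
Proof. by move=> mE; rewrite fineK ?fin_num_measure. Qed.

Lemma measurable_bigcap_preimage (A : 'I_n -> set R) :
  (forall j, measurable (A j)) -> measurable (\bigcap_j (B j @^-1` A j)).
Proof.
move=> mA; apply: fin_bigcap_measurable; first exact: finite_finset.
by move=> j _; exact: measurable_preimage.
Qed.

Lemma cylinder_setI_closed J : setI_closed (cylinder J).
Proof.
move=> _ _ [A [mA JA ->]] [A' [mA' JA' ->]].
exists (fun j => A j `&` A' j); split.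
- by move=> j; exact: measurableI.
- by move=> j jJ; rewrite JA // JA' // setTI.
- by rewrite bigcapI.
Qed.

Lemma cylinder_measurable J E : cylinder J E -> measurable E.
Proof. by move=> [A [mA _ ->]]; exact: measurable_bigcap_preimage. Qed.

Lemma cylinder_indep J i E (C : set R) : i \notin J -> cylinder J E ->
  measurable C -> P (E `&` B i @^-1` C) = (P E * P (B i @^-1` C))%E.
Proof.
move=> iJ [A [mA JA ->]] mC.
pose A' j := if j == i then C else A j.
have mA' j : measurable (A' j) by rewrite /A'; case: ifP.
have -> : \bigcap_j (B j @^-1` A j) `&` B i @^-1` C = \bigcap_j (B j @^-1` A' j).
  apply/seteqP; split => t /=.
    by move=> [AB Ct] j _; rewrite /A'; case: eqP => [->//|_]; exact: AB.
  move=> AB; split; last by have := AB i I; rewrite /A' eqxx.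
  by move=> j _; have := AB j I; rewrite /A'; case: eqP => [->|//]; rewrite JA.
have indA := indB mA.
rewrite (bigD1 i) //= JA // preimage_setT probability_setT mul1r in indA.
have indA' := indB mA'; rewrite (bigD1 i) //= {2}/A' eqxx in indA'.
have eq_other : \prod_(j < n | j != i) fine (P (B j @^-1` A' j)) =
                \prod_(j < n | j != i) fine (P (B j @^-1` A j)).
  by apply: eq_bigr => j /negbTE ji; rewrite /A' ji.
rewrite eq_other -indA in indA'.
rewrite (fineE (measurable_bigcap_preimage mA')) indA'.
rewrite (fineE (measurable_bigcap_preimage mA)) (fineE (measurable_preimage i mC)).
by rewrite mulrC.
Qed.

Lemma sigma_cylinder_measurable J E : <<s cylinder J >> E -> measurable E.
Proof.
move: E; apply: smallest_sub; first exact: sigma_algebra_measurable.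
exact: cylinder_measurable.
Qed.

Lemma sigma_cylinder_indep J i (C : set R) E : i \notin J -> measurable C ->
  <<s cylinder J >> E -> P (E `&` B i @^-1` C) = (P E * P (B i @^-1` C))%E.
Proof.
move=> iJ mC; suff : <<s cylinder J >> `<=`
    [set E | measurable E /\ P (E `&` B i @^-1` C) = (P E * P (B i @^-1` C))%E].
  by move=> sub /sub[].
apply: lambda_system_subset => //.
- exact: cylinder_setI_closed.
- exact/indep_lambda_system/measurable_preimage.
- move=> F cF; split; first exact: cylinder_measurable cF.
  by move: (cylinder_indep iJ cF mC).
Qed.

Lemma measurable_sigma_cylinder J (f : T -> R) :
  measurable_fun (setT : set (sigma_cylinder J)) f -> measurable_fun setT f.
Proof. by move=> mf _ A mA; exact: sigma_cylinder_measurable (mf measurableT A mA). Qed.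

Lemma measurable_sigma_cylinder_coord J j : j \in J ->
  measurable_fun (setT : set (sigma_cylinder J)) (B j).
Proof.
move=> jJ _ A mA; rewrite setTI; apply: sub_gen_smallest.
exists (fun k => if k == j then A else setT); split.
- by move=> k; case: ifP.
- by move=> k kJ; case: eqP => // kj; rewrite kj jJ in kJ.
- apply/seteqP; split => t /=; first by move=> At k _; case: eqP => [->|].
  by move=> AB; have := AB j I; rewrite eqxx.
Qed.

Let RV (X : T -> R) (mX : measurable_fun setT X) : {RV P >-> R} :=
  HB.pack X (isMeasurableFun.Build _ _ _ _ X mX).

Lemma ge0_integral_indep J i (X : T -> R) (h : R * R -> \bar R) : i \notin J ->
  measurable_fun (setT : set (sigma_cylinder J)) X -> measurable_fun setT h ->
  (forall z, 0 <= h z)%E ->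
  (\int[P]_t h (X t, B i t) = \int[P]_t \int[P]_s h (X t, B i s))%E.
Proof.
move=> iJ mXJ mh h0; have mX := measurable_sigma_cylinder mXJ.
have mXB : measurable_fun setT (fun t => (X t, B i t)) by exact: measurable_fun_pair.
pose XB : {RV P >-> (R * R)%type} :=
  HB.pack (fun t => (X t, B i t)) (isMeasurableFun.Build _ _ _ _ _ mXB).
have law_XB A : measurable A -> distribution P XB A =
    (distribution P (RV mX) \x distribution P (RV (mB i)))%E A.
  move=> mA; apply/esym/product_measure_unique => // A1 A2 mA1 mA2 /=.
  rewrite /pushforward -(sigma_cylinder_indep iJ mA2) //.
  by have := mXJ measurableT A1 mA1; rewrite setTI.
transitivity (\int[distribution P XB]_z h z)%E.
  by rewrite ge0_integral_distribution.
rewrite (eq_measure_integral _ (fun A mA _ => law_XB A mA)).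
rewrite fubini_tonelli1 // /fubini_F ge0_integral_distribution //; last 2 first.
- exact: measurable_fun_fubini_tonelli_F.
- by move=> x; apply: integral_ge0 => y _; exact: h0.
apply: eq_integral => t _ /=; rewrite ge0_integral_distribution //.
exact: measurable_fun_pair2.
Qed.

End independent_family.

Section random_variables.
Context d (T : measurableType d) (R : realType) (P : probability T R).
Implicit Types X Y : T -> R.

Definition centered X t := X t - mean P X.

Lemma measurable_centered X :
  measurable_fun setT X -> measurable_fun setT (centered X).
Proof. by move=> mX; exact: measurable_funB. Qed.

Lemma integrable_centered X : P.-integrable setT (EFin \o X) ->
  P.-integrable setT (EFin \o centered X).
Proof.
move=> iX; have -> : EFin \o centered X = ((EFin \o X) \- cst (mean P X)%:E)%E.
  by apply/funext.
by apply: integrableB => //; exact: finite_measure_integrable_cst.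
Qed.

Lemma integral_centered X : P.-integrable setT (EFin \o X) ->
  (\int[P]_t (centered X t)%:E = 0)%E.
Proof.
move=> iX; rewrite integralB_EFin //; last exact: finite_measure_integrable_cst.
rewrite integral_cst //.
have -> : ((mean P X)%:E * P setT)%E = (mean P X)%:E.
  by rewrite probability_setT mule1.
by rewrite /mean unlock fineK ?subee // integrable_fin_num.
Qed.

Lemma measurable_integral_pair Y (h : R * R -> \bar R) :
  measurable_fun setT Y -> measurable_fun setT h -> (forall z, 0 <= h z)%E ->
  measurable_fun setT (fun x : R => \int[P]_s h (x, Y s))%E.
Proof.
move=> mY mh h0.
apply: (measurable_fun_fubini_tonelli_F (fun z : R * T => h (z.1, Y z.2))) => //.
apply: measurableT_comp mh _.
exact: measurable_fun_pair measurable_fst (measurableT_comp mY measurable_snd).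
Qed.

Lemma symmetric_integral_centered X (phi : R -> \bar R) :
  measurable_fun setT X -> symmetric_around_mean P X ->
  measurable_fun setT phi -> (forall x, 0 <= phi x)%E ->
  (\int[P]_t phi (centered X t) = \int[P]_t phi (- centered X t)%R)%E.
Proof.
move=> mX symX mphi phi0.
have mXc := measurable_centered mX.
have mNXc : measurable_fun setT (fun t => - centered X t) by exact: measurableT_comp.
pose Xc : {RV P >-> R} := HB.pack (centered X) (isMeasurableFun.Build _ _ _ _ _ mXc).
pose NXc : {RV P >-> R} :=
  HB.pack (fun t => - centered X t) (isMeasurableFun.Build _ _ _ _ _ mNXc).
transitivity (\int[distribution P Xc]_y phi y)%E.
  by rewrite ge0_integral_distribution.
transitivity (\int[distribution P NXc]_y phi y)%E; last first.
  by rewrite ge0_integral_distribution.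
apply: eq_measure_integral => A mA _ /=; rewrite /pushforward.
transitivity (P ((fun t => mean P X - X t) @^-1` A)); first exact: symX.
by congr (P _); apply/seteqP; split => t /=; rewrite /centered opprB.
Qed.

Lemma symmetric_integral_abs_shift X (phi : R -> \bar R) (x : R) :
  measurable_fun setT X -> symmetric_around_mean P X ->
  measurable_fun setT phi -> (forall x, 0 <= phi x)%E ->
  (\int[P]_t phi `| `|x| + centered X t|%R = \int[P]_t phi `|x + centered X t|%R)%E.
Proof.
move=> mX symX mphi phi0; have [x0|x0] := leP 0 x; first by rewrite ger0_norm.
rewrite ltr0_norm // (symmetric_integral_centered (phi := fun z => phi `|- x + z|)) //.
- by apply: eq_integral => t _; rewrite -opprD normrN.
- by apply: measurableT_comp => //; apply: measurableT_comp => //; exact: measurable_funD.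
Qed.

Definition st_le X Y := forall phi : R -> \bar R, measurable_fun setT phi ->
  (forall x, 0 <= phi x)%E -> {homo phi : x y / x <= y >-> (x <= y)%E} ->
  (\int[P]_t phi (X t) <= \int[P]_t phi (Y t))%E.

Lemma st_le_integral X Y : st_le X Y ->
  (forall t, 0 <= X t) -> (forall t, 0 <= Y t) ->
  (\int[P]_t (X t)%:E <= \int[P]_t (Y t)%:E)%E.
Proof.
move=> XY X0 Y0.
have maxE (V : T -> R) : (forall t, 0 <= V t) ->
    (\int[P]_t (Num.max (V t) 0)%:E = \int[P]_t (V t)%:E)%E.
  by move=> V0; apply: eq_integral => t _; rewrite max_l.
rewrite -(maxE X) // -(maxE Y) //; apply: (XY (fun x => (Num.max x 0)%:E)).
- by apply/measurable_EFinP; exact: measurable_maxr.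
- by move=> x; rewrite lee_fin le_max lexx orbT.
- by move=> x y xy; rewrite lee_fin ge_max !le_max lexx xy /= ?orbT.
Qed.

Lemma dil_le_integral_abs X Y x :
  P.-integrable setT (EFin \o X) -> P.-integrable setT (EFin \o Y) ->
  dil_le P X Y ->
  (\int[P]_t (`|x + centered X t|)%:E <= \int[P]_t (`|x + centered Y t|)%:E)%E.
Proof.
have iabs Z : P.-integrable setT (EFin \o Z) ->
    P.-integrable setT (fun t => (`|x + centered Z t|)%:E).
  move=> iZ; apply: (integrable_norm (f := fun t => x + centered Z t)).
  have -> : EFin \o (fun t => x + centered Z t) = (cst x%:E \+ (EFin \o centered Z))%E.
    by apply/funext.
  apply: integrableD => //; first exact: finite_measure_integrable_cst.
  exact: integrable_centered.
have convex_abs : convex_fun (fun z => `|x + z|).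
  move=> a b t t0 t1.
  have -> : x + (t * a + (1 - t) * b) = t * (x + a) + (1 - t) * (x + b) by ring.
  apply: le_trans (ler_normD _ _) _.
  by rewrite !normrM !(ger0_norm t0) (ger0_norm (_ : 0 <= 1 - t)) // subr_ge0.
move=> iX iY /(_ _ convex_abs (iabs _ iX) (iabs _ iY)).
by rewrite unlock.
Qed.

End random_variables.

Section appointment.
Context d (T : measurableType d) (R : realType) (P : probability T R) (n : nat).
Variable B : 'I_n -> T -> R.
Hypothesis mB : forall i, measurable_fun setT (B i).
Hypothesis iB : forall i, P.-integrable setT (EFin \o B i).
Hypothesis indB : mutually_independent P B.
Implicit Types (s : 'S_n) (J A : {set 'I_n}) (i j : 'I_n).

Local Notation mu := (fun i => mean P (B i)).
Local Notation Z i := (centered P (B i)).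
Local Notation sigmaJ J := (sigma_cylinder B J).

Definition prefix (k : nat) : {set 'I_n} := [set j : 'I_n | (j < k)%N].

Definition sumZ A t := \sum_(j in A) Z j t.

Definition psum s k t := \sum_(j < k) slot_incr s B mu j t.

Lemma slot_incr_ord s (k : 'I_n) t : slot_incr s B mu k t = Z (s k) t.
Proof.
by rewrite /slot_incr; case: insubP => [k' _ /val_inj -> //|]; rewrite ltn_ord.
Qed.

Lemma psum_sumZ s k t : (k <= n)%N -> psum s k t = sumZ (s @: prefix k) t.
Proof.
move=> kn; rewrite /psum (big_ord_widen n (fun m : nat => slot_incr s B mu m t) kn).
rewrite /sumZ big_imset /=; last by move=> x y _ _; exact: perm_inj.
by apply: eq_big => j; [rewrite inE|rewrite slot_incr_ord].
Qed.

Lemma waitW_ge0 s k t : 0 <= waitW s B mu k t.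
Proof. by case: k => //= k; rewrite le_max lexx. Qed.

Lemma psum_le_waitW s k t : psum s k t <= waitW s B mu k t.
Proof.
elim: k => [|k IH] /=; first by rewrite /psum big_ord0.
by rewrite /psum big_ord_recr /= le_max lerD2r IH orbT.
Qed.

Lemma measurable_slot_incr_sigma s J k :
  (forall j : 'I_n, nat_of_ord j = k -> s j \in J) ->
  measurable_fun (setT : set (sigmaJ J)) (slot_incr s B mu k).
Proof.
move=> sJ; rewrite /slot_incr; case: insubP => [k' _ kk|_]; last exact: measurable_cst.
by apply: measurable_funB => //; apply: measurable_sigma_cylinder_coord; exact: sJ.
Qed.

Lemma measurable_waitW_sigma s J k : {subset s @: prefix k <= J} ->
  measurable_fun (setT : set (sigmaJ J)) (waitW s B mu k).
Proof.
elim: k => [|k IH] sJ /=; first exact: measurable_cst.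
apply: measurable_maxr; first exact: measurable_cst.
apply: measurable_funD.
  by apply: IH => _ /imsetP[j jk ->]; apply/sJ/imset_f; rewrite !inE in jk *; exact: ltnW.
by apply: measurable_slot_incr_sigma => j jk; apply/sJ/imset_f; rewrite inE jk.
Qed.

Lemma measurable_psum_sigma s J k : {subset s @: prefix k <= J} ->
  measurable_fun (setT : set (sigmaJ J)) (psum s k).
Proof.
move=> sJ; apply: measurable_sum => j; apply: measurable_slot_incr_sigma => j' jj.
by apply/sJ/imset_f; rewrite inE jj.
Qed.

Lemma measurable_sumZ_sigma J A : A \subset J ->
  measurable_fun (setT : set (sigmaJ J)) (sumZ A).
Proof.
move=> AJ; have -> : sumZ A = fun t => \sum_(j < n) (if j \in A then Z j t else 0).
  by apply/funext => t; rewrite /sumZ big_mkcond.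
apply: measurable_sum => j; case: (boolP (j \in A)) => jA; last exact: measurable_cst.
apply: measurable_funB => //; apply: measurable_sigma_cylinder_coord.
exact: (fintype.subsetP AJ).
Qed.

Lemma measurable_waitW s k : measurable_fun setT (waitW s B mu k).
Proof.
apply: (measurable_sigma_cylinder mB (J := [set: 'I_n]%SET)).
by apply: measurable_waitW_sigma => j; rewrite inE.
Qed.

Lemma measurable_sumZ A : measurable_fun setT (sumZ A).
Proof.
by apply: (measurable_sigma_cylinder mB (J := A)); exact: measurable_sumZ_sigma.
Qed.

Lemma integrable_slot_incr s k : P.-integrable setT (EFin \o slot_incr s B mu k).
Proof.
rewrite /slot_incr; case: insubP => [k' _ _|_]; last exact: integrable0.
exact: integrable_centered.
Qed.

Lemma integral_slot_incr s k : (\int[P]_t (slot_incr s B mu k t)%:E = 0)%E.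
Proof.
rewrite /slot_incr; case: insubP => [k' _ _|_]; last exact: integral0.
exact: integral_centered.
Qed.

Lemma psum0 s : psum s 0 = cst 0.
Proof. by apply/funext => t; rewrite /psum big_ord0. Qed.

Lemma integrable_psum s k : P.-integrable setT (EFin \o psum s k).
Proof.
elim: k => [|k IH]; first by rewrite psum0; exact: integrable0.
have -> : EFin \o psum s k.+1 = ((EFin \o psum s k) \+ (EFin \o slot_incr s B mu k))%E.
  by apply/funext => t; rewrite /= /psum big_ord_recr.
exact: integrableD (integrable_slot_incr s k).
Qed.

Lemma integral_psum s k : (\int[P]_t (psum s k t)%:E = 0)%E.
Proof.
elim: k => [|k IH]; first by rewrite psum0; exact: integral0.
rewrite (eq_integral ((EFin \o psum s k) \+ (EFin \o slot_incr s B mu k))%E); last first.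
  by move=> t _; rewrite /psum big_ord_recr.
rewrite integralD_EFin ?IH ?integral_slot_incr ?adde0 //.
- exact: integrable_psum.
- exact: integrable_slot_incr.
Qed.

Lemma integrable_waitW s k : P.-integrable setT (EFin \o waitW s B mu k).
Proof.
elim: k => [|k IH] /=; first exact: integrable0.
have iD : P.-integrable setT
    ((EFin \o waitW s B mu k) \+ (EFin \o (Num.norm \o slot_incr s B mu k)))%E.
  by apply: integrableD => //; exact/integrable_norm/integrable_slot_incr.
apply: le_integrable iD => //.
  exact/measurable_EFinP/(measurable_waitW s k.+1).
move=> t _ /=; rewrite lee_fin ger0_norm ?le_max ?lexx //.
rewrite ger0_norm ?addr_ge0 ?waitW_ge0 //.
by rewrite ge_max addr_ge0 ?waitW_ge0 //= lerD2l ler_norm.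
Qed.

Lemma integral_abs_psum_le s k : (\int[P]_t (`|psum s k t|)%:E <=
  \int[P]_t (waitW s B mu k t)%:E + \int[P]_t (waitW s B mu k t)%:E)%E.
Proof.
pose f := EFin \o psum s k; have iS := integrable_psum s k.
have mf : measurable_fun setT f := measurable_int _ iS.
rewrite (eq_integral (fun t => f^\+ t + f^\- t)%E); last first.
  by move=> t _; rewrite -abse_EFin -[RHS]/((f^\+ \+ f^\-) t)%E -fune_abse.
rewrite ge0_integralD //; [|exact: measurable_funepos|exact: measurable_funeneg].
have pos_eq_neg : (\int[P]_t f^\+ t = \int[P]_t f^\- t)%E.
  have := integral_psum s k; rewrite integralE.
  rewrite -(fineK (integrable_pos_fin_num _ iS)) //.
  rewrite -(fineK (integrable_neg_fin_num _ iS)) //.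
  by rewrite -EFinB => -[] /eqP; rewrite subr_eq0 => /eqP ->.
have pos_le_W : (\int[P]_t f^\+ t <= \int[P]_t (waitW s B mu k t)%:E)%E.
  apply: ge0_le_integral => //; first exact: measurable_funepos.
    exact/measurable_EFinP/measurable_waitW.
  by move=> t _; rewrite funeposE ge_max !lee_fin psum_le_waitW waitW_ge0.
by rewrite -pos_eq_neg leeD.
Qed.

(** [W_(k+1) - I_(k+1) = W_k + Z], and [Z] has mean zero. *)
Lemma integral_waitW_succ s k : (\int[P]_t (waitW s B mu k.+1 t)%:E =
  \int[P]_t (idleI s B mu k.+1 t)%:E + \int[P]_t (waitW s B mu k t)%:E)%E.
Proof.
set y := fun t => waitW s B mu k t + slot_incr s B mu k t.
have iy : P.-integrable setT (EFin \o y).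
  exact: integrableD (integrable_waitW s k) (integrable_slot_incr s k).
have iI : P.-integrable setT (EFin \o idleI s B mu k.+1).
  have my : measurable_fun setT y by apply/measurable_EFinP; exact: measurable_int iy.
  apply: le_integrable iy => //.
    apply/measurable_EFinP/measurable_maxr; first exact: measurable_cst.
    exact: measurableT_comp.
  move=> t _ /=; rewrite lee_fin ger0_norm ?le_max ?lexx //.
  by rewrite ge_max normr_ge0 -normrN ler_norm.
have -> : (\int[P]_t (waitW s B mu k t)%:E = \int[P]_t (y t)%:E)%E.
  rewrite integralD_EFin ?integral_slot_incr ?adde0 //.
  - exact: integrable_waitW.
  - exact: integrable_slot_incr.
have max0E (a : R) : Num.max 0 a = Num.max 0 (- a) + a.
  have [a0|a0] := leP 0 a; first by rewrite max_l ?oppr_le0 // add0r.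
  by rewrite max_r ?oppr_ge0 ?ltW // addNr.
by rewrite -integralD_EFin //; apply: eq_integral => t _ /=; rewrite max0E.
Qed.

Lemma sum_integral_idleI s m : (\sum_(k < m) \int[P]_t (idleI s B mu k t)%:E =
  \int[P]_t (waitW s B mu m.-1 t)%:E)%E.
Proof.
elim: m => [|m IH]; first by rewrite big_ord0 integral0.
rewrite big_ord_recr /= IH; case: m {IH} => [|m] /=; first by rewrite integral0 adde0.
by rewrite integral_waitW_succ addeC.
Qed.

Hypothesis dilB : forall i j : 'I_n,
  nat_of_ord j = (nat_of_ord i).+1 -> dil_le P (B i) (B j).

Lemma integral_abs_shift_le x i j : (i <= j)%N ->
  (\int[P]_t (`|x + Z i t|)%:E <= \int[P]_t (`|x + Z j t|)%:E)%E.
Proof.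
move/subnKC; move: (j - i)%N => m; elim: m j => [|m IH] j ji.
  by rewrite addn0 in ji; rewrite -(val_inj ji).
have im : (i + m < n)%N by apply: leq_trans (ltn_ord j); rewrite -ji addnS.
apply: le_trans (IH (Ordinal im) erefl) _.
by apply: dil_le_integral_abs => //; apply: dilB; rewrite /= -ji addnS.
Qed.

Let measurable_abs_shift i :
  measurable_fun setT (fun z : R * R => (`|z.1 + (z.2 - mu i)|)%:E).
Proof.
apply/measurable_EFinP/measurableT_comp => //.
by apply: measurable_funD => //; exact: measurable_funB.
Qed.

Lemma measurable_integral_abs_shift i :
  measurable_fun setT (fun x : R => \int[P]_s (`|x + Z i s|)%:E)%E.
Proof.
apply: measurable_integral_pair (mB i) (measurable_abs_shift i) _ => z.
by rewrite lee_fin.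
Qed.

Lemma integral_abs_sumZ_add J c : c \notin J ->
  (\int[P]_t (`|sumZ J t + Z c t|)%:E =
   \int[P]_t \int[P]_s (`|sumZ J t + Z c s|)%:E)%E.
Proof.
move=> cJ; have mSJ := measurable_sumZ_sigma (subxx J).
apply: (ge0_integral_indep mB indB cJ mSJ (measurable_abs_shift c)) => z.
by rewrite lee_fin.
Qed.

Lemma integral_abs_sumZ_exchange A a b : a \in A -> b \notin A -> (b <= a)%N ->
  (\int[P]_t (`|sumZ (b |: (A :\ a)) t|)%:E <= \int[P]_t (`|sumZ A t|)%:E)%E.
Proof.
move=> aA bA ba; set J := A :\ a.
have aJ : a \notin J by rewrite !inE eqxx.
have bJ : b \notin J by rewrite !inE negb_and bA orbT.
have eA t : sumZ A t = sumZ J t + Z a t by rewrite /sumZ (big_setD1 a aA) addrC.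
have eJb t : sumZ (b |: J) t = sumZ J t + Z b t by rewrite /sumZ big_setU1 // addrC.
under eq_integral do rewrite eJb.
under [in leRHS]eq_integral do rewrite eA.
rewrite !integral_abs_sumZ_add //; apply: ge0_le_integral => //.
- by move=> t _; apply: integral_ge0.
- exact: measurableT_comp (measurable_integral_abs_shift b) (measurable_sumZ J).
- exact: measurableT_comp (measurable_integral_abs_shift a) (measurable_sumZ J).
- by move=> t _; exact: integral_abs_shift_le.
Qed.

Lemma integral_abs_sumZ_prefix_le k A : #|A| = #|prefix k| ->
  (\int[P]_t (`|sumZ (prefix k) t|)%:E <= \int[P]_t (`|sumZ A t|)%:E)%E.
Proof.
have [m ltAm] := ubnP (\sum_(j in A) (j : nat))%N.
elim: m A ltAm => // m IH A ltAm cardA.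
have [->|neqA] := eqVneq A (prefix k); first exact: le_refl.
have [a aA aP] : exists2 a, a \in A & a \notin prefix k.
  by apply/subsetPn; apply: contra neqA => sAP; rewrite eqEcard sAP cardA leqnn.
have [b bP bA] : exists2 b, b \in prefix k & b \notin A.
  by apply/subsetPn; apply: contra neqA => sPA; rewrite eq_sym eqEcard sPA cardA leqnn.
have ba : (b < a)%N by rewrite !inE -leqNgt in aP bP; exact: leq_trans bP aP.
apply: le_trans (integral_abs_sumZ_exchange aA bA (ltnW ba)).
have bJ : b \notin A :\ a by rewrite !inE negb_and bA orbT.
apply: IH; last by rewrite cardsU1 bJ -cardA (cardsD1 a A) aA.
rewrite big_setU1 //=; rewrite (big_setD1 a aA) /= ltnS in ltAm.
by apply: leq_trans ltAm; rewrite ltn_add2r.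
Qed.

Hypothesis symB : forall i, symmetric_around_mean P (B i).

Lemma st_le_lindley_step J i (X Y : T -> R) : i \notin J ->
  measurable_fun (setT : set (sigmaJ J)) X ->
  measurable_fun (setT : set (sigmaJ J)) Y ->
  st_le P X (fun t => `|Y t|) ->
  st_le P (fun t => Num.max 0 (X t + Z i t)) (fun t => `|Y t + Z i t|).
Proof.
move=> iJ mXJ mYJ XY phi mphi phi0 phi_up.
have mY := measurable_sigma_cylinder mB mYJ.
pose h1 z := phi (Num.max 0 (z.1 + (z.2 - mu i))).
pose h2 z := phi `|z.1 + (z.2 - mu i)|.
have mh1 : measurable_fun setT h1.
  apply: measurableT_comp => //; apply: measurable_maxr => //.
  by apply: measurable_funD => //; exact: measurable_funB.
have mh2 : measurable_fun setT h2.
  apply: measurableT_comp => //; apply: measurableT_comp => //.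
  by apply: measurable_funD => //; exact: measurable_funB.
have mh_at (h : R * R -> \bar R) (x : R) :
    measurable_fun setT h -> measurable_fun setT (fun w => h (x, B i w)).
  move=> mh; apply: measurableT_comp mh _.
  exact: measurable_fun_pair (measurable_cst x) (mB i).
have -> : (\int[P]_t phi (Num.max 0 (X t + Z i t))%R =
           \int[P]_t \int[P]_s h1 (X t, B i s))%E.
  exact: (ge0_integral_indep mB indB iJ mXJ mh1 (fun z => phi0 _)).
have -> : (\int[P]_t phi `|Y t + Z i t|%R = \int[P]_t \int[P]_s h2 (Y t, B i s))%E.
  exact: (ge0_integral_indep mB indB iJ mYJ mh2 (fun z => phi0 _)).
pose g x := (\int[P]_s h1 (x, B i s))%E.
have mg : measurable_fun setT g :=
  measurable_integral_pair P (mB i) mh1 (fun z => phi0 _).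
have g_up : {homo g : x y / x <= y >-> (x <= y)%E}.
  move=> x y xy; apply: ge0_le_integral => //.
  - by move=> w _; exact: phi0.
  - exact: mh_at.
  - exact: mh_at.
  - by move=> w _; apply: phi_up; rewrite ge_max !le_max lexx lerD2r xy !orbT.
have XYg := XY g mg (fun x => integral_ge0 _ (fun w _ => phi0 _)) g_up.
apply: le_trans XYg _; apply: ge0_le_integral => //.
- by move=> t _; apply: integral_ge0 => w _; exact: phi0.
- by apply: measurableT_comp mg _; exact: measurableT_comp.
- exact: measurableT_comp (measurable_integral_pair P (mB i) mh2 (fun z => phi0 _)) mY.
- move=> t _; rewrite /h2 /= -(symmetric_integral_abs_shift _ (mB i)) //.
  apply: ge0_le_integral => //; first by move=> w _; exact: phi0.
  - exact: (mh_at h1 `|Y t| mh1).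
  - exact: (mh_at h2 `|Y t| mh2).
  - by move=> w _; apply: phi_up; rewrite ge_max normr_ge0 ler_norm.
Qed.

Lemma waitW_st_le_abs_psum s k : (k <= n)%N ->
  st_le P (waitW s B mu k) (fun t => `|psum s k t|).
Proof.
elim: k => [_ phi _ _ _|k IH kn].
  rewrite [leRHS](eq_integral (fun t => phi 0)) // => t _.
  by rewrite /psum big_ord0 normr0.
pose o : 'I_n := Ordinal kn; pose J := s @: prefix k.
have oJ : s o \notin J by rewrite mem_imset ?inE ?ltnn //; exact: perm_inj.
have -> : waitW s B mu k.+1 = fun t => Num.max 0 (waitW s B mu k t + Z (s o) t).
  by apply/funext => t; rewrite /= (slot_incr_ord s o).
have -> : (fun t => `|psum s k.+1 t|) = fun t => `|psum s k t + Z (s o) t|.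
  by apply/funext => t; rewrite /psum big_ord_recr /= (slot_incr_ord s o).
apply: st_le_lindley_step oJ _ _ (IH (ltnW kn)).
- exact: measurable_waitW_sigma.
- exact: measurable_psum_sigma.
Qed.

Lemma integral_waitW_id_le tau k : (k < n)%N ->
  (\int[P]_t (waitW 1%g B mu k t)%:E <=
   \int[P]_t (waitW tau B mu k t)%:E + \int[P]_t (waitW tau B mu k t)%:E)%E.
Proof.
move=> kn; apply: le_trans (integral_abs_psum_le tau k).
apply: le_trans (st_le_integral (waitW_st_le_abs_psum 1%g (ltnW kn)) _ _) _ => //.
  exact: waitW_ge0.
have id_prefix : (1%g : 'S_n) @: prefix k = prefix k.
  by rewrite (eq_imset _ (@perm1 _)) imset_id.
under eq_integral do rewrite (psum_sumZ _ _ (ltnW kn)) id_prefix.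
under [in leRHS]eq_integral do rewrite (psum_sumZ _ _ (ltnW kn)).
by apply: integral_abs_sumZ_prefix_le; rewrite card_imset //; exact: perm_inj.
Qed.

Definition mean_wait s k := fine (\int[P]_t (waitW s B mu k t)%:E).

Lemma mean_waitE s k :
  (\int[P]_t (waitW s B mu k t)%:E = (mean_wait s k)%:E)%E.
Proof. by rewrite fineK // integrable_fin_num //; exact: integrable_waitW. Qed.

Lemma costE s omega : cost P B s mu omega =
  (omega * mean_wait s n.-1 + (1 - omega) * \sum_(k < n) mean_wait s k)%:E.
Proof.
rewrite /cost.
have expectationE (f : T -> R) : ('E_P[f] = \int[P]_t (f t)%:E)%E by rewrite unlock.
have -> : (\sum_(k < n) 'E_P[idleI s B mu k] = (mean_wait s n.-1)%:E)%E.
  by under eq_bigr do rewrite expectationE; rewrite sum_integral_idleI mean_waitE.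
have -> : (\sum_(k < n) 'E_P[waitW s B mu k] = (\sum_(k < n) mean_wait s k)%:E)%E.
  by rewrite -sumEFin; apply: eq_bigr => k _; rewrite expectationE mean_waitE.
by rewrite -!EFinM -EFinD.
Qed.

Lemma cost_id_le tau omega : (1 <= n)%N -> 0 <= omega <= 1 ->
  (cost P B 1%g mu omega <= 2%:E * cost P B tau mu omega)%E.
Proof.
move=> n_gt0 /andP[omega_ge0 omega_le1]; rewrite !costE -EFinM lee_fin.
have le2 k : (k < n)%N -> mean_wait 1%g k <= 2 * mean_wait tau k.
  move=> kn; have := integral_waitW_id_le tau kn.
  by rewrite !mean_waitE -EFinD lee_fin mulr2n mulrDl mul1r.
have le2_last : mean_wait 1%g n.-1 <= 2 * mean_wait tau n.-1.
  by apply: le2; rewrite prednK.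
have le2_sum : \sum_(k < n) mean_wait 1%g k <= 2 * \sum_(k < n) mean_wait tau k.
  by rewrite mulr_sumr; apply: ler_sum => k _; exact: le2.
nra.
Qed.

End appointment.

Theorem theorem3p1 (d : measure_display) (T : measurableType d) (R : realType)
  (P : probability T R) (n : nat) (B : 'I_n -> T -> R) (omega : R) :
  (1 <= n)%N ->
  (forall i, measurable_fun setT (B i)) ->
  (forall i, B i \in Lfun P 1) ->
  (forall i, B i \in Lfun P 2) ->
  mutually_independent P B ->
  0 < omega < 1 ->
  (forall i j : 'I_n, nat_of_ord j = (nat_of_ord i).+1 -> dil_le P (B i) (B j)) ->
  (forall i, symmetric_around_mean P (B i)) ->
  let mu := fun i => mean P (B i) in
  forall tau : 'S_n,
    (cost P B 1%g mu omega <= 2%:E * cost P B tau mu omega)%E.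
Proof.
move=> n_gt0 mB B_L1 _ indB /andP[omega_ge0 omega_le1] dilB symB mu tau.
apply: cost_id_le => //; last by rewrite !ltW.
by move=> i; apply/Lfun1_integrable.
Qed.
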